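(* Let $\mathcal E\in\mathrm{Bun}_{\mathcal G'}$ be the bundle associated to a pair $(\tilde w,g)\in\widetilde W\times\mathrm{GL}_n/Q$. (i) If $g\in X_i$ for some $2\le i\le n$, then $T_1\subseteq(\mathrm{Aut}_{\mathcal G'}(\mathcal E))^\circ$. (ii) If $g\in X_{1j}\subseteq X_1-\mathring X_1$ for some $2\le j\le n$, then $T_j\subseteq(\mathrm{Aut}_{\mathcal G'}(\mathcal E))^\circ$. (iii) If $\tilde w\notin\Omega$, $g=\mathring g$, and $\beta\in\Phi(G(\tilde w))$, then $Y_{\tilde\beta}\subseteq(\mathrm{Aut}_{\mathcal G'}(\mathcal E))^\circ$. (iv) If $\tilde w\in\Omega$ and $g\in\mathring X_1$, then $\mathrm{Aut}_{\mathcal G'}(\mathcal E)$ is trivial.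
   Context: Setting: $k$ finite field, $G=\mathrm{GL}_n$, $X=\mathbb P^1$ with coordinate $s$ at $\infty$, $t=s^{-1}$ at $0$; $T$ diagonal torus, $B$/$B^-$ upper/lower triangular, $Q$ mirabolic (last row $(0,\dots,0,1)$). $I\subset\mathrm{GL}_n(k[[s]])$ preimage of $B$ at $s=0$; $I^{\mathrm{opp}}\subset\mathrm{GL}_n(k[[t]])$ preimage of $B^-$ at $t=0$; $\mathtt Q$ preimage of $Q$ in $\mathrm{GL}_n(\mathcal O_1)$; $I^-=\{g\in\mathrm{GL}_n(k[s^{-1}]):g|_{s^{-1}=0}\in B^-\}$. $\widetilde W$ = monomial matrices $w\,\mathrm{diag}(s^{\lambda_i})$; $\Omega=\{\tilde w:\tilde wI\tilde w^{-1}=I\}$. $S(\tilde w)=I^-\cap\tilde wI\tilde w^{-1}$, $\mathrm{ev}_1$ = evaluation at $s=1$, $G(\tilde w)=\mathrm{ev}_1(S(\tilde w))$; $\Phi(H)$ = set of roots $\alpha$ with $U_\alpha\subseteq H$. $\mathcal G'$ is the group scheme over $X$ with generic fibre $\mathrm{GL}_n$ and levels $I^{\mathrm{opp}}$ at $0$, $\mathtt Q$ at $1$, $I$ at $\infty$, hyperspecial elsewhere. The bundle associated to $(\tilde w,g)$: its image in $\mathrm{Bun}(I^{\mathrm{opp}},I)(k)=I^-\backslash\mathrm{GL}_n(k((s)))/I$ is the double coset of $\tilde w$, and $g\in\mathrm{GL}_n/Q$ is its level structure at $1$ in the fibre $\mathrm{GL}_n/Q$ of the forgetful map; then $\mathrm{Aut}_{\mathcal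 G'}(\mathcal E)=\{h\in S(\tilde w):\mathrm{ev}_1(h)\in\mathrm{Stab}_{G(\tilde w)}(g)\}$. Notation in $\mathrm{GL}_n/Q$: $T_j=\{\mathrm{diag}(1,\dots,t_j,\dots,1)\}$; $w_i$ permutation matrix of the transposition $(i\,n)$; $X_i=Bw_iQ/Q$; $X_1=T\prod_{j\ge2}U_{\alpha_{1j}}w_1Q/Q$ and $X_{1j}\subset X_1$ the elements with trivial $U_{\alpha_{1j}}$-component; $\mathring X_1=X_1-\bigcup_{j=2}^nX_{1j}$; $\mathring g=\exp(\sum_{j=2}^nE_{1j})w_1Q$, so $\mathring X_1=T\mathring g$. For a root $\beta=\alpha_{pq}$, $Y_\beta\subset TU_\beta$ consists of $t\,u(t)$, $t\in T_q$, with $u(t)=\exp((1-t_q)E_{pq})$ if $p\neq1\neq q$ and $u(t)=\exp((t_q-1)E_{pq})$ otherwise ($\exp(N)=1+N$). For $\beta\in\Phi(G(\tilde w))$, $\tilde\beta$ is an affine root whose root subgroup lies in $S(\tilde w)$ and whose finite part is $\beta$; $\mathrm{ev}_1$ gives an isomorphism $TU_{\tilde\beta}\simeq TU_\beta$ and $Y_{\tilde\beta}$ is the preimage of $Y_\beta$. *)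

(* Conventions:
   - indices are 0-based: paper index p corresponds to ordinal value p-1;
   - loop-group elements are matrices over {poly K}, the variable being t = s^{-1};
   - formal Laurent series in s are coefficient arrays int -> K (no ring structure
     is needed: we only conjugate by monomial matrices, written out explicitly). *)
From HB Require Import structures.
From mathcomp Require Import all_boot all_order all_algebra all_fingroup.
Import GRing.Theory.
Local Open Scope ring_scope.

Section Defs.
Variables (K : fieldType) (n : nat).

(* M c d e = coefficient of s^e in the (c,d) entry. *)
Definition LArr := 'I_n -> 'I_n -> int -> K.

(* tilde w = w * diag(s^{lam_i}) with w = perm_mx sigma, i.e.
   tilde w (b,d) = [sigma b == d] s^{lam d},  tilde w^{-1} (c,a) = [sigma a == c] s^{- lam c}.
   conjInv sigma lam M = tilde w^{-1} * M * tilde w, matrix product written out. *)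
Definition conjInv (sigma : 'S_n) (lam : 'I_n -> int) (M : LArr) : LArr :=
  fun c d e => \sum_(a < n) \sum_(b < n)
     (if (sigma a == c) && (sigma b == d) then M a b (e + lam c - lam d) else 0).

Definition red0 (M : LArr) : 'M[K]_n := \matrix_(c, d) M c d 0.

Definition upper (A : 'M[K]_n) := forall i j : 'I_n, (j < i)%N -> A i j = 0.
Definition lower (A : 'M[K]_n) := forall i j : 'I_n, (i < j)%N -> A i j = 0.
Definition inB (A : 'M[K]_n) := upper A /\ A \in unitmx.
Definition inBm (A : 'M[K]_n) := lower A /\ A \in unitmx.

(* Iwahori I = preimage of B in GL_n(K[[s]]): entries in K[[s]] and reduction in B
   (a matrix over K[[s]] is invertible iff its reduction is). *)
Definition inIwahori (M : LArr) :=
  (forall c d e, e < 0 -> M c d e = 0) /\ inB (red0 M).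

(* tilde w in Omega  iff  tilde w I tilde w^{-1} = I *)
Definition inOmega (sigma : 'S_n) (lam : 'I_n -> int) :=
  forall M : LArr, inIwahori (conjInv sigma lam M) <-> inIwahori M.

Definition LMat := 'M[{poly K}]_n.

(* entry h a b = sum_m c_m t^m = sum_m c_m s^{-m} *)
Definition toLArr (h : LMat) : LArr := fun a b e =>
  match e with
  | Posz O => (h a b)`_0
  | Posz (S _) => 0
  | Negz m => (h a b)`_(S m)
  end.

Definition ev0 (h : LMat) : 'M[K]_n := map_mx (fun p => p.[0]) h.
Definition ev1 (h : LMat) : 'M[K]_n := map_mx (fun p => p.[1]) h.
Definition constM (A : 'M[K]_n) : LMat := map_mx polyC A.

Definition inGLpoly (h : LMat) := \det h \is a GRing.unit.
Definition inIminus (h : LMat) := inGLpoly h /\ inBm (ev0 h).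
(* S(tilde w) = I^- cap tilde w I tilde w^{-1} *)
Definition inS sigma lam (h : LMat) :=
  inIminus h /\ inIwahori (conjInv sigma lam (toLArr h)).
Definition inG sigma lam (x : 'M[K]_n) := exists2 h, inS sigma lam h & ev1 h = x.

Definition inQ (A : 'M[K]_n) :=
  (forall i j : 'I_n, nat_of_ord i = n.-1 -> A i j = (nat_of_ord j == n.-1)%:R)
  /\ A \in unitmx.
Definition cosetEq (g g' : 'M[K]_n) := exists2 q, inQ q & g = g' *m q.
Definition stab sigma lam (g x : 'M[K]_n) :=
  inG sigma lam x /\ cosetEq (x *m g) g.
Definition inAut sigma lam (g : 'M[K]_n) (h : LMat) :=
  inS sigma lam h /\ stab sigma lam g (ev1 h).

(* U_{alpha_pq} = { exp(x E_pq) = 1 + x E_pq } *)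
Definition Eroot (p q : 'I_n) (x : K) : 'M[K]_n := 1%:M + x *: delta_mx p q.
Definition inPhi (H : 'M[K]_n -> Prop) (p q : 'I_n) :=
  p != q /\ forall x, H (Eroot p q x).
(* affine root subgroup with finite part alpha_pq: {1 + x s^{-m} E_pq} = {1 + x t^m E_pq} *)
Definition affRoot (p q : 'I_n) (m : nat) (x : K) : LMat :=
  1%:M + (x *: 'X^m) *: delta_mx p q.

Definition swapn (i a : nat) : nat :=
  if a == i then n.-1 else if a == n.-1 then i else a.
Definition wmat (i : nat) : 'M[K]_n := \matrix_(a, b) (nat_of_ord b == swapn i a)%:R.
Definition inXi (i : nat) (g : 'M[K]_n) :=
  exists b q, inB b /\ inQ q /\ g = b *m wmat i *m q.
Definition inT (d : 'M[K]_n) :=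
  (forall i j : 'I_n, i != j -> d i j = 0) /\ d \in unitmx.
(* prod_{j>=2} exp(u_j E_{1j}) = 1 + sum_{j>=2} u_j E_{1j}   (0-based: row 0, columns >= 1) *)
Definition Urow (u : 'I_n -> K) : 'M[K]_n :=
  \matrix_(a, b) ((a == b)%:R +
     (if (nat_of_ord a == 0%N) && (nat_of_ord b != 0%N) then u b else 0)).
Definition inX1 (g : 'M[K]_n) :=
  exists d u q, inT d /\ inQ q /\ g = d *m Urow u *m wmat 0 *m q.
Definition inX1j (j : 'I_n) (g : 'M[K]_n) :=
  exists d u q, inT d /\ inQ q /\ u j = 0 /\ g = d *m Urow u *m wmat 0 *m q.
Definition inX1circ (g : 'M[K]_n) :=
  inX1 g /\ forall j : 'I_n, nat_of_ord j != 0%N -> ~ inX1j j g.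
Definition gcirc : 'M[K]_n := Urow (fun _ => 1) *m wmat 0.

Definition Tj (j : nat) (x : K) : 'M[K]_n :=
  \matrix_(a, b) (if a == b then (if nat_of_ord a == j then x else 1) else 0).
Definition inTj (j : nat) (A : 'M[K]_n) := exists2 x, x != 0 & A = Tj j x.

Definition inY (p q : 'I_n) (A : 'M[K]_n) :=
  exists2 x, x != 0 &
  A = Tj q x *m Eroot p q
        (if (nat_of_ord p != 0%N) && (nat_of_ord q != 0%N) then 1 - x else x - 1).
Definition inYt (p q : 'I_n) (m : nat) (h : LMat) :=
  (exists d x, inT d /\ h = constM d *m affRoot p q m x) /\ inY p q (ev1 h).

(* regular functions: polynomials in the coefficients (h a b)`_m *)
Inductive regfun : (LMat -> K) -> Prop :=
  | rf_const (c : K) : regfun (fun _ => c)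
  | rf_coord (a b : 'I_n) (m : nat) : regfun (fun h => (h a b)`_m)
  | rf_add f g : regfun f -> regfun g -> regfun (fun h => f h + g h)
  | rf_mul f g : regfun f -> regfun g -> regfun (fun h => f h * g h).

Definition zclosed (Z : LMat -> Prop) :=
  exists F : (LMat -> K) -> Prop,
    (forall f, F f -> regfun f) /\ forall h, Z h <-> (forall f, F f -> f h = 0).

Definition zconnected (C : LMat -> Prop) :=
  forall Z1 Z2, zclosed Z1 -> zclosed Z2 ->
    (forall h, C h -> Z1 h \/ Z2 h) ->
    (forall h, C h -> Z1 h -> Z2 h -> False) ->
    (forall h, C h -> Z1 h) \/ (forall h, C h -> Z2 h).

Definition idcomp (G : LMat -> Prop) (h : LMat) :=
  exists C : LMat -> Prop,
    zconnected C /\ (forall x, C x -> G x) /\ C 1%:M /\ C h.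

End Defs.

(* A point gQ of GL_n/Q is determined by the row vector v = e_n g^-1, and
   x g Q = g Q iff v x = v.  On the cells this vector is explicit: v_1 = 0 on X_i
   (i >= 2), v_j = 0 on X_1j, v = (1,-1,...,-1) at ring g, and v has no zero entry
   on ring X_1.  Hence y |-> T_1(y), y |-> T_j(y) and y |-> T_q(y) u(y), the latter
   lifted to S(w) along the affine root, are polynomial maps from the punctured line
   into Aut(E) passing through 1, so they land in the identity component.  When w is
   in Omega, S(w) = I^- n I consists of constant diagonal matrices, and a diagonal
   matrix fixing a vector without zero entries is trivial. *)

From HB Require Import structures.
From mathcomp Require Import all_boot all_order all_algebra all_fingroup.
From mathcomp Require Import ring.
From Stdlib Require Import Classical.
Set Implicit Arguments.
Unset Strict Implicit.
Unset Printing Implicit Defensive.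

Import GRing.Theory Num.Theory.
Local Open Scope ring_scope.

Lemma diag_mulmxE (R : pzRingType) m n (D : 'M[R]_m) (A : 'M[R]_(m, n)) :
  (forall i j, i != j -> D i j = 0) -> forall i j, (D *m A) i j = D i i * A i j.
Proof.
move=> Ddiag i j; rewrite mxE (bigD1 i) //= big1 ?addr0 // => k ki.
by rewrite Ddiag ?mul0r // eq_sym.
Qed.

Lemma mulmx_diagE (R : pzRingType) m n (A : 'M[R]_(m, n)) (D : 'M[R]_n) :
  (forall i j, i != j -> D i j = 0) -> forall i j, (A *m D) i j = A i j * D j j.
Proof.
move=> Ddiag i j; rewrite mxE (bigD1 j) //= big1 ?addr0 // => k kj.
by rewrite Ddiag ?mulr0.
Qed.

Lemma trig_unitmx_neq0 (F : fieldType) n (A : 'M[F]_n) :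
  is_trig_mx A -> A \in unitmx -> forall i, A i i != 0.
Proof.
move=> Atrig; rewrite unitmxE unitfE det_trig // prodf_seq_neq0 => /allP Adiag i.
exact: Adiag (mem_index_enum i).
Qed.

Lemma diag_unitmx_neq0 (F : fieldType) n (D : 'M[F]_n) :
  (forall i j, i != j -> D i j = 0) -> D \in unitmx -> forall i, D i i != 0.
Proof.
move=> Ddiag; apply: trig_unitmx_neq0; apply/is_trig_mxP => i j ij.
by apply: Ddiag; rewrite neq_ltn ij.
Qed.

Lemma upper_unitmx_neq0 (F : fieldType) n (B : 'M[F]_n) :
  inB F n B -> forall i, B i i != 0.
Proof.
move=> [Bup Bunit] i; have := @trig_unitmx_neq0 _ _ B^T _ _ i; rewrite mxE; apply.
  by apply/is_trig_mxP => {}i j ij; rewrite mxE Bup.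
by rewrite unitmx_tr.
Qed.

Section PolynomialCurves.
Variables (K : closedFieldType) (n : nat).

Definition polyfun (f : K -> K) := exists p : {poly K}, f =1 horner p.

Lemma polyfun_const c : polyfun (fun _ => c).
Proof. by exists c%:P => y; rewrite hornerC. Qed.

Lemma polyfun_id : polyfun id.
Proof. by exists 'X => y; rewrite hornerX. Qed.

Lemma polyfun_add f g : polyfun f -> polyfun g -> polyfun (fun y => f y + g y).
Proof. by move=> [p Ep] [q Eq]; exists (p + q) => y; rewrite hornerD Ep Eq. Qed.

Lemma polyfun_mul f g : polyfun f -> polyfun g -> polyfun (fun y => f y * g y).
Proof. by move=> [p Ep] [q Eq]; exists (p * q) => y; rewrite hornerM Ep Eq. Qed.

Lemma polyfun_opp f : polyfun f -> polyfun (fun y => - f y).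
Proof. by move=> [p Ep]; exists (- p) => y; rewrite hornerN Ep. Qed.

Lemma polyfun_eq f g : f =1 g -> polyfun g -> polyfun f.
Proof. by move=> Efg [p Ep]; exists p => y; rewrite Efg Ep. Qed.

Definition polycurve (P : K -> LMat K n) :=
  forall a b m, polyfun (fun y => (P y a b)`_m).

Lemma polycurve_regfun P f : polycurve P -> regfun K n f -> polyfun (fun y => f (P y)).
Proof.
move=> HP; elim=> [c|a b m|{}f g _ Hf _ Hg|{}f g _ Hf _ Hg].
- exact: polyfun_const.
- exact: HP.
- exact: polyfun_add.
- exact: polyfun_mul.
Qed.

Lemma poly_horner_eq0 (p : {poly K}) : (forall z, p.[z] = 0) -> p = 0.
Proof.
move=> p0; apply/eqP/negPn/negP => /closed_nonrootP [z].
by rewrite /root p0 eqxx.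
Qed.

(* If the curve leaves [Z1], some equation [p1] of [Z1] is a nonzero polynomial
   along it; off the finitely many zeros of [p1 * 'X] the curve lies in [Z2], so
   every equation of [Z2] vanishes identically along it. *)
Lemma zconnected_curve P : polycurve P ->
  zconnected K n (fun h => exists2 y, y != 0 & h = P y).
Proof.
move=> HP Z1 Z2 [F1 [regF1 EZ1]] [F2 [regF2 EZ2]] cover _.
case: (classic (forall h, (exists2 y, y != 0 & h = P y) -> Z1 h)) => [|notZ1].
  by left.
right.
have [y0 _ Z1y0] : exists2 y0, y0 != 0 & ~ Z1 (P y0).
  apply: NNPP => H; apply: notZ1 => _ [y y0 ->].
  by apply: NNPP => Z1y; apply: H; exists y.
have [f1 F1f1 f1y0] : exists2 f1, F1 f1 & f1 (P y0) != 0.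
  apply: NNPP => H; apply: Z1y0; apply/EZ1 => f F1f.
  by apply: NNPP => fy0; apply: H; exists f => //; apply/eqP.
have [p1 /= Ep1] := polycurve_regfun HP (regF1 _ F1f1).
have p1_neq0 : p1 != 0 by apply: contraNneq f1y0 => p10; rewrite Ep1 p10 horner0.
move=> _ [y _ ->]; apply/EZ2 => f2 F2f2.
have [p2 /= Ep2] := polycurve_regfun HP (regF2 _ F2f2).
have : p2 * p1 * 'X = 0.
  apply: poly_horner_eq0 => z; rewrite !hornerE.
  have [->|z0] := eqVneq z 0; first by rewrite mulr0.
  have [p1z|p1z] := eqVneq p1.[z] 0; first by rewrite p1z mulr0 mul0r.
  suff Z2z : Z2 (P z) by rewrite -Ep2 (EZ2 _).1 // !mul0r.
  have [Z1z|//] : Z1 (P z) \/ Z2 (P z) by apply: cover; exists z.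
  by move: p1z; rewrite -Ep1 (EZ1 _).1 ?eqxx.
move/eqP; rewrite !mulf_eq0 polyX_eq0 (negbTE p1_neq0) !orbF => /eqP p20.
by rewrite Ep2 p20 horner0.
Qed.

Lemma idcomp_curve (G : LMat K n -> Prop) P :
  polycurve P -> P 1 = 1%:M -> (forall y, y != 0 -> G (P y)) ->
  forall y, y != 0 -> idcomp K n G (P y).
Proof.
move=> HP P1 GP y y0; exists (fun h => exists2 y, y != 0 & h = P y).
split; first exact: zconnected_curve.
split; first by move=> _ [z z0 ->]; apply: GP.
by split; [exists 1; rewrite ?oner_eq0|exists y].
Qed.

End PolynomialCurves.

Section LoopGroup.
Variables (K : fieldType) (n : nat).

Lemma conjInvE sigma lam (M : LArr K n) c d e :
  conjInv K n sigma lam M c d e =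
  M ((sigma^-1)%g c) ((sigma^-1)%g d) (e + lam c - lam d).
Proof.
have sum_perm (F : 'I_n -> K) i :
    \sum_(a < n) (if sigma a == i then F a else 0) = F ((sigma^-1)%g i).
  rewrite (bigD1 ((sigma^-1)%g i)) //= permKV eqxx big1 ?addr0 // => a ai.
  by case: eqP => // sai; rewrite -sai permK eqxx in ai.
rewrite /conjInv (eq_bigr (fun a => if sigma a == c
  then M a ((sigma^-1)%g d) (e + lam c - lam d) else 0)) ?sum_perm // => a _.
by case: eqP => _ /=; [exact: sum_perm | exact: big1].
Qed.

Lemma toLArr_diag_mul (D : 'M[K]_n) (h : LMat K n) a b e :
  (forall i j, i != j -> D i j = 0) ->
  toLArr K n (constM K n D *m h) a b e = D a a * toLArr K n h a b e.
Proof.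
move=> Ddiag; rewrite /toLArr diag_mulmxE => [|i j ij]; last by rewrite mxE Ddiag.
by rewrite mxE; case: e => [[|m]|m]; rewrite ?coefCM ?mulr0.
Qed.

Lemma inIwahori_scale (M M' : LArr K n) (s : 'I_n -> K) :
  (forall c d e, M' c d e = s c * M c d e) -> (forall c, s c != 0) ->
  inIwahori K n M -> inIwahori K n M'.
Proof.
move=> EM' s_neq0 [Mint [Mup Munit]].
split=> [c d e e0|]; first by rewrite EM' Mint ?mulr0.
have -> : red0 K n M' = diag_mx (\row_c s c) *m red0 K n M.
  by apply/matrixP => i j; rewrite mul_diag_mx !mxE EM'.
split=> [i j ji|]; first by rewrite mul_diag_mx mxE Mup ?mulr0.
rewrite unitmx_mul Munit andbT unitmxE det_diag unitfE prodf_seq_neq0.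
by apply/allP => i _; rewrite mxE s_neq0.
Qed.

Lemma ev0_mulmx (A B : LMat K n) : ev0 K n (A *m B) = ev0 K n A *m ev0 K n B.
Proof. exact: (map_mxM (horner_eval (0 : K))). Qed.

Lemma ev1_mulmx (A B : LMat K n) : ev1 K n (A *m B) = ev1 K n A *m ev1 K n B.
Proof. exact: (map_mxM (horner_eval (1 : K))). Qed.

Lemma ev0_constM (D : 'M[K]_n) : ev0 K n (constM K n D) = D.
Proof. by apply/matrixP => a b; rewrite !mxE hornerC. Qed.

Lemma ev1_constM (D : 'M[K]_n) : ev1 K n (constM K n D) = D.
Proof. by apply/matrixP => a b; rewrite !mxE hornerC. Qed.

Lemma constM1 : constM K n 1%:M = 1%:M :> LMat K n.
Proof. exact: (map_mx1 (@polyC K)). Qed.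

Lemma inGLpoly_constM (D : 'M[K]_n) : D \in unitmx -> inGLpoly K n (constM K n D).
Proof. by rewrite unitmxE /inGLpoly det_map_mx; apply: rmorph_unit. Qed.

Lemma ev1_unitmx (h : LMat K n) : inGLpoly K n h -> ev1 K n h \in unitmx.
Proof.
rewrite unitmxE (det_map_mx (horner_eval (1 : K))).
exact: (rmorph_unit (horner_eval (1 : K))).
Qed.

Lemma inS_diag_mul sigma lam (D : 'M[K]_n) h :
  inT K n D -> inS K n sigma lam h -> inS K n sigma lam (constM K n D *m h).
Proof.
move=> [Ddiag Dunit] [[hGL [hlow hunit]] hIw].
have D_neq0 := diag_unitmx_neq0 Ddiag Dunit.
split; [split|].
- by rewrite /inGLpoly det_mulmx unitrM -/(inGLpoly K n _) inGLpoly_constM.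
- rewrite ev0_mulmx ev0_constM; split; last by rewrite unitmx_mul Dunit.
  by move=> i j ij; rewrite diag_mulmxE // hlow ?mulr0.
- apply: (inIwahori_scale (s := fun c => D ((sigma^-1)%g c) ((sigma^-1)%g c))) hIw.
    by move=> c d e; rewrite !conjInvE toLArr_diag_mul.
  by move=> c; apply: D_neq0.
Qed.

Lemma inS1 sigma lam : inS K n sigma lam (1%:M : LMat K n).
Proof.
have toLArr1 a b e : toLArr K n 1%:M a b e = ((a == b) && (e == 0))%:R.
  by rewrite /toLArr mxE; case: e => [[|m]|m]; case: (a == b); rewrite ?coefC.
have conj1 c d e :
    conjInv K n sigma lam (toLArr K n 1%:M) c d e = ((c == d) && (e == 0))%:R.
  rewrite conjInvE toLArr1 (inj_eq perm_inj).
  by have [->|] := eqVneq c d; rewrite ?addrK.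
have upper1 : upper K n (1%:M : 'M[K]_n).
  by move=> i j; rewrite mxE; case: eqP => // ->; rewrite ltnn.
have lower1 : lower K n (1%:M : 'M[K]_n).
  by move=> i j; rewrite mxE; case: eqP => // ->; rewrite ltnn.
split; [split|].
- by rewrite /inGLpoly det1 unitr1.
- by rewrite -constM1 ev0_constM; split; [|exact: unitmx1].
- split=> [c d e e0|]; first by rewrite conj1 (negbTE (ltr0_neq0 e0)) andbF.
  have -> : red0 K n (conjInv K n sigma lam (toLArr K n 1%:M)) = 1%:M.
    by apply/matrixP => i j; rewrite !mxE conj1 andbT.
  by split; [|exact: unitmx1].
Qed.

Lemma inS_constM sigma lam (D : 'M[K]_n) : inT K n D -> inS K n sigma lam (constM K n D).
Proof. by move=> DT; rewrite -[constM K n D]mulmx1; apply: inS_diag_mul (inS1 _ _). Qed.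

Lemma inS_Omega_diag sigma lam h : inOmega K n sigma lam -> inS K n sigma lam h ->
  exists2 D : 'M[K]_n, (forall i j, i != j -> D i j = 0) & h = constM K n D.
Proof.
move=> Om [[_ [hlow _]] hIw]; have [hint [hup _]] := (Om (toLArr K n h)).1 hIw.
exists (\matrix_(a, b) (h a b)`_0).
  move=> i j; rewrite neq_ltn => /orP [ij|ji].
    by have := hlow i j ij; rewrite !mxE horner_coef0.
  by have := hup i j ji; rewrite !mxE.
apply/matrixP => a b; rewrite !mxE; apply/polyP => [[|l]]; rewrite coefC //=.
exact: (hint a b (Negz l)).
Qed.

Lemma affRoot_coef p q m x a b l :
  (affRoot K n p q m x a b)`_l =
  ((a == b) && (l == 0%N))%:R + x * ((a == p) && (b == q) && (l == m))%:R.
Proof.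
rewrite !mxE coefD; case: (a == b); case: (_ && _) => /=;
  by rewrite ?(coef1, coef0, mulr1, mulr0, coefZ, coefXn).
Qed.

Lemma affRoot0 p q m : affRoot K n p q m 0 = 1%:M.
Proof. by rewrite /affRoot scale0r scale0r addr0. Qed.

Lemma ev1_affRoot p q m x : ev1 K n (affRoot K n p q m x) = Eroot K n p q x.
Proof.
apply/matrixP => a b; rewrite !mxE hornerD hornerM hornerZ hornerXn expr1n mulr1.
by rewrite !hornerMn hornerC.
Qed.

End LoopGroup.

Section MirabolicQuotient.
Variables (K : fieldType) (n : nat).

Definition elast : 'rV[K]_n := \row_j (nat_of_ord j == n.-1)%:R.

Lemma elast_mulmx (M : 'M[K]_n) (i : 'I_n) : nat_of_ord i = n.-1 ->
  elast *m M = row i M.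
Proof.
move=> i_last; apply/rowP => j; rewrite !mxE (bigD1 i) //= mxE i_last eqxx mul1r.
rewrite big1 ?addr0 // => k ki; rewrite mxE; case: eqP => [k_last|_]; last by rewrite mul0r.
by rewrite -i_last in k_last; rewrite (val_inj k_last) eqxx in ki.
Qed.

Lemma inQ_elast q : inQ K n q -> elast *m q = elast.
Proof.
move=> [qlast _]; apply/rowP => j.
have i_lt : (n.-1 < n)%N by rewrite ltn_predL (leq_ltn_trans _ (ltn_ord j)).
by rewrite (elast_mulmx _ (i := Ordinal i_lt)) // !mxE qlast.
Qed.

Lemma cosetEq_mul_fix (g x : 'M[K]_n) (v : 'rV[K]_n) :
  g \in unitmx -> x \in unitmx -> v *m g = elast ->
  cosetEq K n (x *m g) g <-> v *m x = v.
Proof.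
move=> gunit xunit vg; have v_def : v = elast *m invmx g by rewrite -vg mulmxK.
split=> [[q qQ xg]|vx].
  apply: (can_inj (mulmxK gunit)).
  by rewrite -mulmxA xg mulmxA vg inQ_elast.
exists (invmx g *m x *m g); last by rewrite !mulmxA mulmxV // mul1mx.
split=> [i j i_last|]; last by rewrite !unitmx_mul unitmx_inv gunit xunit.
set M := invmx g *m x *m g.
have : elast *m M = elast by rewrite /M !mulmxA -v_def vx vg.
by rewrite (elast_mulmx _ i_last) => /rowP /(_ j); rewrite !mxE.
Qed.

Lemma swapnK i a : swapn n i (swapn n i a) = a.
Proof.
rewrite /swapn; have [->|ai] := eqVneq a i; first by rewrite eqxx; case: eqVneq.
have [->|a_last] := eqVneq a n.-1; first by rewrite eqxx.
by rewrite (negbTE ai) (negbTE a_last).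
Qed.

Lemma swapn_lt i a : (i < n)%N -> (a < n)%N -> (swapn n i a < n)%N.
Proof.
move=> i_lt a_lt; rewrite /swapn; case: eqP => _.
  by rewrite ltn_predL (leq_ltn_trans _ a_lt).
by case: eqP.
Qed.

Lemma swapn_eq_last i a : (swapn n i a == n.-1) = (a == i).
Proof.
rewrite /swapn; have [_|ai] := eqVneq a i; first by rewrite eqxx.
have [a_last|a_last] := eqVneq a n.-1; last exact: negbTE.
by rewrite -a_last eq_sym (negbTE ai).
Qed.

Lemma row_wmat (u : 'rV[K]_n) i (a k : 'I_n) : nat_of_ord k = swapn n i a ->
  (u *m wmat K n i) 0 k = u 0 a.
Proof.
move=> ka; rewrite mxE (bigD1 a) //= big1 ?addr0; first by rewrite mxE ka eqxx mulr1.
move=> b ba; rewrite mxE ka; case: eqP => [sab|_]; last by rewrite mulr0.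
have ab : b = a by apply: val_inj; rewrite /= -(swapnK i b) -sab swapnK.
by rewrite ab eqxx in ba.
Qed.

Lemma wmat_elast (u : 'rV[K]_n) (i : 'I_n) :
  u *m wmat K n i = elast -> u = delta_mx 0 i.
Proof.
move=> uw; apply/rowP => a; have k_lt := swapn_lt (ltn_ord i) (ltn_ord a).
by rewrite -(row_wmat u (i := i) (k := Ordinal k_lt)) // uw !mxE /= swapn_eq_last.
Qed.

Lemma row_of_cell (M q : 'M[K]_n) (v : 'rV[K]_n) (i : 'I_n) : inQ K n q ->
  v *m (M *m wmat K n i *m q) = elast -> v *m M = delta_mx 0 i.
Proof.
move=> qQ; have [_ qunit] := qQ; rewrite !mulmxA => vg; apply: wmat_elast.
by apply: (can_inj (mulmxK qunit)); rewrite vg inQ_elast.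
Qed.

Lemma row_Urow (w : 'rV[K]_n) u (z k : 'I_n) : nat_of_ord z = 0%N ->
  (w *m Urow K n u) 0 k =
  w 0 k + (if nat_of_ord k != 0%N then w 0 z * u k else 0).
Proof.
move=> z0; rewrite mxE (eq_bigr (fun b => w 0 b * (b == k)%:R +
  (if (nat_of_ord b == 0%N) && (nat_of_ord k != 0%N) then w 0 b * u k else 0))).
  rewrite big_split /= (bigD1 k) //= eqxx mulr1 big1 ?addr0 => [|b /negbTE ->]; last first.
    by rewrite mulr0.
  case: (nat_of_ord k != 0%N); last by rewrite big1 // => b _; rewrite andbF.
  rewrite (bigD1 z) //= z0 eqxx big1 ?addr0 // => b bz; rewrite andbT.
  by case: eqP => // b0; rewrite (val_inj (etrans b0 (esym z0))) eqxx in bz.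
by move=> b _; rewrite mxE mulrDr; case: ifP; rewrite ?mulr0.
Qed.

Lemma neq_ord0 (z k : 'I_n) : nat_of_ord z = 0%N -> (k != z) = (nat_of_ord k != 0%N).
Proof. by move=> z0; rewrite -z0. Qed.

Lemma Urow_delta (w : 'rV[K]_n) u (z : 'I_n) : nat_of_ord z = 0%N ->
  w *m Urow K n u = delta_mx 0 z -> w 0 z = 1 /\ forall k, k != z -> w 0 k = - u k.
Proof.
move=> z0 /rowP wU.
have wUk k : w 0 k + (if nat_of_ord k != 0%N then w 0 z * u k else 0) = (k == z)%:R.
  by have := wU k; rewrite (row_Urow _ _ _ z0) !mxE eqxx.
have wz : w 0 z = 1 by have := wUk z; rewrite z0 /= eqxx addr0.
split=> // k kz; have := wUk k; rewrite (negbTE kz) wz mul1r.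
rewrite -(neq_ord0 _ z0) kz.
by move/eqP; rewrite addr_eq0 => /eqP.
Qed.

End MirabolicQuotient.

Section Cells.
Variables (K : fieldType) (n : nat).
Implicit Types (g : 'M[K]_n) (v : 'rV[K]_n).

Lemma Xi_row0_eq0 g v (i z : 'I_n) : (0 < i)%N -> nat_of_ord z = 0%N ->
  inXi K n i g -> v *m g = elast K n -> v 0 z = 0.
Proof.
move=> i0 z0 [b [q [bB [qQ ->]]]] /(row_of_cell qQ) /rowP /(_ z).
have -> : (v *m b) 0 z = v 0 z * b z z.
  rewrite mxE (bigD1 z) //= big1 ?addr0 // => a az.
  by rewrite bB.1 ?mulr0 // z0 lt0n -(neq_ord0 _ z0).
have zi : (z == i) = false by rewrite eq_sym; apply/negbTE; rewrite neq_ord0 // -lt0n.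
rewrite !mxE eqxx zi /= => /eqP.
by rewrite mulf_eq0 (negbTE (upper_unitmx_neq0 bB z)) orbF => /eqP.
Qed.

Lemma X1j_row_eq0 g v (j : 'I_n) : (0 < j)%N ->
  inX1j K n j g -> v *m g = elast K n -> v 0 j = 0.
Proof.
move=> j0 [d [u [q [[ddiag dunit] [qQ [uj ->]]]]]].
have n0 : (0 < n)%N := leq_ltn_trans (leq0n j) (ltn_ord j).
move=> /(row_of_cell (i := Ordinal n0) qQ); rewrite mulmxA.
case/Urow_delta => // _ /(_ j); rewrite neq_ord0 // -lt0n j0 uj oppr0 => /(_ isT).
rewrite mulmx_diagE // => /eqP; rewrite mulf_eq0 (negbTE (diag_unitmx_neq0 ddiag dunit j)).
by rewrite orbF => /eqP.
Qed.

Lemma gcirc_rowE g v : cosetEq K n g (gcirc K n) -> v *m g = elast K n ->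
  forall k : 'I_n, v 0 k = if nat_of_ord k == 0%N then 1 else -1.
Proof.
move=> [q qQ ->] vg k; have n0 : (0 < n)%N := leq_ltn_trans (leq0n k) (ltn_ord k).
move: vg; rewrite /gcirc => /(row_of_cell (i := Ordinal n0) qQ).
case/Urow_delta => // vz vk.
case: eqP => [k0|/eqP k0]; last by rewrite vk // neq_ord0.
by rewrite -vz; congr (v 0 _); apply: val_inj.
Qed.

Lemma X1circ_row_neq0 g v : inX1circ K n g -> v *m g = elast K n ->
  forall k : 'I_n, v 0 k != 0.
Proof.
move=> [[d [u [q [[ddiag dunit] [qQ gE]]]]] notX1j] vg k.
have n0 : (0 < n)%N := leq_ltn_trans (leq0n k) (ltn_ord k).
move: vg; rewrite gE => /(row_of_cell (i := Ordinal n0) qQ); rewrite mulmxA.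
case/Urow_delta => // vdz vdk; apply/negP => /eqP vk0.
have vdk0 : (v *m d) 0 k = 0 by rewrite mulmx_diagE // vk0 mul0r.
have [kz|kz] := eqVneq k (Ordinal n0).
  by move: vdz; rewrite -kz vdk0 => /eqP; rewrite eq_sym oner_eq0.
apply: (notX1j k); first by rewrite -(neq_ord0 _ (z := Ordinal n0)).
exists d, u, q; do !split=> //.
by apply/eqP; rewrite -oppr_eq0 -vdk // vdk0.
Qed.

Lemma Tj_diag (j : nat) (x : K) : forall a b : 'I_n, a != b -> Tj K n j x a b = 0.
Proof. by move=> a b /negbTE ab; rewrite mxE ab. Qed.

Lemma Tj_inT (j : nat) (x : K) : x != 0 -> inT K n (Tj K n j x).
Proof.
move=> x0; split; first exact: Tj_diag.
have -> : Tj K n j x = diag_mx (\row_a (if nat_of_ord a == j then x else 1)).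
  by apply/matrixP => a b; rewrite !mxE; case: eqP => [->|]; rewrite ?eqxx ?mulr1n ?mulr0n.
rewrite unitmxE det_diag unitfE prodf_seq_neq0; apply/allP => a _ /=.
by rewrite mxE; case: ifP => _ //; exact: oner_neq0.
Qed.

Lemma Tj1 (j : nat) : Tj K n j 1 = 1%:M.
Proof. by apply/matrixP => a b; rewrite !mxE; case: eqP => //; case: eqP. Qed.

Lemma ErootE p q x a b :
  Eroot K n p q x a b = (a == b)%:R + x * ((a == p) && (b == q))%:R.
Proof. by rewrite !mxE. Qed.

Lemma row_Eroot (w : 'rV[K]_n) p q c (k : 'I_n) :
  (w *m Eroot K n p q c) 0 k = w 0 k + (if k == q then c * w 0 p else 0).
Proof.
rewrite /Eroot mulmxDr mulmx1 mxE [in X in _ + X = _]mxE; congr (_ + _).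
rewrite (bigD1 p) //= big1 ?addr0 => [|b /negbTE bp]; last by rewrite !mxE bp mulr0 mulr0.
by rewrite !mxE eqxx /=; case: eqP => _; rewrite ?mulr1 ?mulr0 // mulrC.
Qed.

Lemma diag_Eroot_inj (D D' : 'M[K]_n) p q x x' :
  (forall i j, i != j -> D i j = 0) -> (forall i j, i != j -> D' i j = 0) ->
  D p p != 0 -> p != q ->
  D *m Eroot K n p q x = D' *m Eroot K n p q x' -> D = D' /\ x = x'.
Proof.
move=> Ddiag D'diag Dp0 pq /matrixP DE.
have Eentry a b : D a a * Eroot K n p q x a b = D' a a * Eroot K n p q x' a b.
  by rewrite -diag_mulmxE // -[RHS]diag_mulmxE.
have DD' : D = D'.
  apply/matrixP => a b; have [<-|ab] := eqVneq a b; last by rewrite Ddiag ?D'diag.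
  have := Eentry a a; rewrite !ErootE eqxx.
  by case: (eqVneq a p) => [->|] /=; rewrite ?(negbTE pq) ?mulr0 ?addr0 ?mulr1.
split=> //; have := Eentry p q; rewrite -DD' !ErootE (negbTE pq) !eqxx !add0r !mulr1.
exact: mulfI.
Qed.

Definition ucoef (p q : 'I_n) (y : K) :=
  if (nat_of_ord p != 0%N) && (nat_of_ord q != 0%N) then 1 - y else y - 1.

Lemma ucoef1 p q : ucoef p q 1 = 0.
Proof. by rewrite /ucoef; case: ifP; rewrite subrr. Qed.

Lemma Y_stab_gcirc v (p q : 'I_n) y :
  (forall k : 'I_n, v 0 k = if nat_of_ord k == 0%N then 1 else -1) -> p != q ->
  v *m (Tj K n q y *m Eroot K n p q (ucoef p q y)) = v.
Proof.
move=> vE pq; apply/rowP => k.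
rewrite mulmxA row_Eroot !(mulmx_diagE _ (Tj_diag _ _)) !mxE !eqxx.
have [->|kq] := eqVneq k q; last first.
  by have kq' : (nat_of_ord k == q) = false := negbTE kq; rewrite kq' mulr1 addr0.
have pq' : (nat_of_ord p == q) = false := negbTE pq.
rewrite eqxx pq' mulr1 !vE /ucoef.
case: (eqVneq (nat_of_ord p) 0%N) => [p0|p0];
  case: (eqVneq (nat_of_ord q) 0%N) => [q0|q0] /=.
- by move: pq; rewrite -(inj_eq val_inj) /= p0 q0.
- by ring.
- by ring.
- by ring.
Qed.

End Cells.

Section Automorphisms.
Variables (K : fieldType) (n : nat) (sigma : 'S_n) (lam : 'I_n -> int).
Variables (g : 'M[K]_n) (v : 'rV[K]_n).
Hypotheses (g_unit : g \in unitmx) (vg : v *m g = elast K n).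

Lemma inAut_of_fix h : inS K n sigma lam h -> v *m ev1 K n h = v ->
  inAut K n sigma lam g h.
Proof.
move=> hS vh; split=> //; split; first by exists h.
by apply/(cosetEq_mul_fix g_unit (ev1_unitmx hS.1.1) vg).
Qed.

Lemma fix_of_inAut h : inAut K n sigma lam g h -> v *m ev1 K n h = v.
Proof. by move=> [hS [_ hfix]]; apply/(cosetEq_mul_fix g_unit (ev1_unitmx hS.1.1) vg). Qed.

Lemma inAut_Omega_trivial h : inOmega K n sigma lam ->
  (forall k : 'I_n, v 0 k != 0) -> inAut K n sigma lam g h -> h = 1%:M.
Proof.
move=> Om v_neq0 hAut; have [D Ddiag hD] := inS_Omega_diag Om hAut.1.
have /rowP vD : v *m D = v by rewrite -(ev1_constM D) -hD fix_of_inAut.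
rewrite hD -constM1; congr (constM _ _ _); apply/matrixP => a b; rewrite mxE.
have [<-|ab] := eqVneq a b; last by rewrite Ddiag.
have := vD a; rewrite mulmx_diagE // => /eqP.
by rewrite -{2}[v 0 a]mulr1 (inj_eq (mulfI (v_neq0 a))) => /eqP.
Qed.

End Automorphisms.

Section Families.
Variables (K : closedFieldType) (n : nat) (sigma : 'S_n) (lam : 'I_n -> int).
Variables (g : 'M[K]_n) (v : 'rV[K]_n).
Hypotheses (g_unit : g \in unitmx) (vg : v *m g = elast K n).

Lemma polycurve_constM (A : K -> 'M[K]_n) :
  (forall a b, polyfun (fun y => A y a b)) -> polycurve (fun y => constM K n (A y)).
Proof.
move=> HA a b m; apply: (@polyfun_eq _ _ (fun y => if m == 0%N then A y a b else 0)).
  by move=> y; rewrite mxE coefC.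
by case: (m == 0%N); [exact: HA | exact: polyfun_const].
Qed.

Lemma polyfun_Tj (j : nat) (a b : 'I_n) : polyfun (fun y => Tj K n j y a b).
Proof.
apply: (@polyfun_eq _ _
  (fun y => if a == b then if nat_of_ord a == j then y else 1 else 0)).
  by move=> y; rewrite mxE.
by case: (a == b); [case: (_ == j); [exact: polyfun_id|] |]; exact: polyfun_const.
Qed.

Lemma polyfun_ucoef (p q : 'I_n) : polyfun (fun y : K => ucoef p q y).
Proof.
rewrite /ucoef; case: (_ && _).
  by apply: polyfun_add; [exact: polyfun_const | apply: polyfun_opp; exact: polyfun_id].
by apply: polyfun_add; [exact: polyfun_id | exact: polyfun_const].
Qed.

Lemma polycurve_Y (p q : 'I_n) m :
  polycurve (fun y => constM K n (Tj K n q y) *m affRoot K n p q m (ucoef p q y)).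
Proof.
move=> a b l; apply: (@polyfun_eq _ _ (fun y => Tj K n q y a a *
  (((a == b) && (l == 0%N))%:R + ucoef p q y * ((a == p) && (b == q) && (l == m))%:R))).
  move=> y; rewrite diag_mulmxE => [|i j ij]; last by rewrite mxE Tj_diag ?raddf0.
  by rewrite [constM _ _ _ _ _]mxE coefCM affRoot_coef.
apply/polyfun_mul/polyfun_add; [exact: polyfun_Tj | exact: polyfun_const |].
exact/polyfun_mul/polyfun_const/polyfun_ucoef.
Qed.

Lemma Tj_idcomp (j : nat) : (forall k : 'I_n, nat_of_ord k = j -> v 0 k = 0) ->
  forall A, inTj K n j A -> idcomp K n (inAut K n sigma lam g) (constM K n A).
Proof.
move=> vj _ [x x0 ->]; apply: (idcomp_curve (P := fun y => constM K n (Tj K n j y))) x0.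
- exact/polycurve_constM/polyfun_Tj.
- by rewrite Tj1 constM1.
move=> y y0; apply: (inAut_of_fix g_unit vg); first exact/inS_constM/Tj_inT.
rewrite ev1_constM; apply/rowP => k; rewrite mulmx_diagE; last exact: Tj_diag.
by rewrite mxE eqxx; case: eqP => [/vj ->|_]; rewrite ?mul0r ?mulr1.
Qed.

Lemma Yt_idcomp p q m : p != q ->
  (forall x, inS K n sigma lam (affRoot K n p q m x)) ->
  (forall y, y != 0 -> v *m (Tj K n q y *m Eroot K n p q (ucoef p q y)) = v) ->
  forall h, inYt K n p q m h -> idcomp K n (inAut K n sigma lam g) h.
Proof.
move=> pq affS vfix _ [[d [x [[ddiag dunit] ->]]] [y y0 ev1h]].
have [-> ->] : d = Tj K n q y /\ x = ucoef p q y.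
  apply: diag_Eroot_inj (Tj_diag _ _) (diag_unitmx_neq0 ddiag dunit p) pq _ => //.
  by rewrite -ev1h ev1_mulmx ev1_constM ev1_affRoot.
apply: (idcomp_curve (P := fun y => constM K n (Tj K n q y) *m
                                     affRoot K n p q m (ucoef p q y))) y0.
- exact: polycurve_Y.
- by rewrite Tj1 constM1 mul1mx ucoef1 affRoot0.
move=> z z0; apply: (inAut_of_fix g_unit vg).
  by apply: inS_diag_mul; [exact: Tj_inT | exact: affS].
by rewrite ev1_mulmx ev1_constM ev1_affRoot vfix.
Qed.

End Families.

Theorem proposition8p5 (k : finFieldType) (K : closedFieldType)
  (iota : {rmorphism k -> K}) (n : nat) (sigma : 'S_n) (lam : 'I_n -> int)
  (g0 : 'M[k]_n) :
  g0 \in unitmx ->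
  let g := map_mx iota g0 in
  let Aut := inAut K n sigma lam g in
  (* (i) *)
  (forall i : 'I_n, (0 < i)%N -> inXi K n i g ->
     forall A, inTj K n 0 A -> idcomp K n Aut (constM K n A)) /\
  (* (ii) *)
  (forall j : 'I_n, (0 < j)%N -> inX1j K n j g ->
     forall A, inTj K n j A -> idcomp K n Aut (constM K n A)) /\
  (* (iii) *)
  (~ inOmega K n sigma lam -> cosetEq K n g (gcirc K n) ->
     forall p q : 'I_n, inPhi K n (inG K n sigma lam) p q ->
     forall m : nat, (forall x, inS K n sigma lam (affRoot K n p q m x)) ->
     forall h, inYt K n p q m h -> idcomp K n Aut h) /\
  (* (iv) *)
  (inOmega K n sigma lam -> inX1circ K n g ->
     forall h, Aut h -> h = 1%:M).
Proof.
move=> g0_unit g Aut.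
have g_unit : g \in unitmx by rewrite map_unitmx.
pose v := elast K n *m invmx g.
have vg : v *m g = elast K n by rewrite mulmxKV.
split; [|split; [|split]].
- move=> i i0 gXi; apply: (Tj_idcomp sigma lam g_unit vg) => a a0.
  exact: Xi_row0_eq0 i0 a0 gXi vg.
- move=> j j0 gX1j; apply: (Tj_idcomp sigma lam g_unit vg) => a /val_inj ->.
  exact: X1j_row_eq0 j0 gX1j vg.
- move=> _ gcircQ p q [pq _] m affS; apply: (Yt_idcomp g_unit vg pq affS) => y _.
  exact: Y_stab_gcirc (gcirc_rowE gcircQ vg) pq.
- move=> Om gX1circ h; apply: (inAut_Omega_trivial g_unit vg Om).
  exact: X1circ_row_neq0 gX1circ vg.
Qed.
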